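(* Assume the standing assumptions in the context. Let $S\subsetneq S^*$ and $k=|S|$. Then $$\inf_{\alpha\in\mathbb{R},\,i\in S^*\setminus S}\mathbb{E}\Big[\big(x^\top\beta^S+\alpha\beta^*_ix_i-y\big)^2\Big]\le\mathbb{E}\big[(x^\top\beta^S-y)^2\big]-\frac{1}{s^*-k}\,\frac{\rho}{L}\,\mathbb{E}\Big[\big(x^\top(\beta^*-\beta^S)\big)^2\Big].$$
   Context: Standing assumptions: $(x,y)$ random with $x\in\mathbb{R}^d$, $y\in\mathbb{R}$; $\mathbb{E}[x]=0$; $y=\langle\beta^*,x\rangle+\epsilon$ with $\mathbb{E}[\epsilon\mid x]=0$; $S^*=\mathrm{supp}(\beta^* )$, $s^*=|S^*|$; $\Sigma$ the covariance of $x$, $\Sigma_F$ its principal submatrix on $F$; there are $0<\rho\le L$ with all eigenvalues of $\Sigma_F$ in $[\rho,L]$ for all $|F|=s^*$; for $|F|=s^*$, $\mu_F:=\max_{j\notin F}\|\Sigma_F^{-1}\mathrm{Cov}(x_F,x_j)\|_1<1$; $|y|<1$ and $\|x\|_\infty<M$ almost surely. $\mathcal{R}(\beta)=\mathbb{E}[(y-\langle x,\beta\rangle)^2]$ and $\beta^S=\arg\min_{\mathrm{supp}(\beta)\subseteq S}\mathcal{R}(\beta)$. *)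

From HB Require Import structures.
From mathcomp Require Import all_boot all_order all_algebra.
From mathcomp Require Import all_classical all_reals all_analysis.
Set Implicit Arguments. Unset Strict Implicit. Unset Printing Implicit Defensive.
Import Order.TTheory GRing.Theory Num.Theory.
Local Open Scope classical_set_scope.
Local Open Scope ring_scope.

Section Defs.
Context (d : measure_display) (T : measurableType d) (R : realType)
  (P : probability T R) (n : nat).

(* real-valued expectation (all variables here are bounded, so finite) *)
Definition Ex (f : T -> R) : R := fine ('E_P[f])%E.

Definition ip (x : 'I_n -> T -> R) (b : 'I_n -> R) (w : T) : R :=
  \sum_(j < n) b j * x j w.

Definition supp (b : 'I_n -> R) : {set 'I_n} := [set i | b i != 0].

Definition Sigma (x : 'I_n -> T -> R) : 'M[R]_n :=
  \matrix_(i, j) fine (covariance P (x i) (x j)).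

Definition SigmaF (x : 'I_n -> T -> R) (F : {set 'I_n}) : 'M[R]_#|F| :=
  \matrix_(a, b) Sigma x (enum_val a) (enum_val b).

Definition CovFj (x : 'I_n -> T -> R) (F : {set 'I_n}) (j : 'I_n) : 'cV[R]_#|F| :=
  \col_a Sigma x (enum_val a) j.

Definition norm1 m (v : 'cV[R]_m) : R := \sum_(a < m) `|v a 0|.

Definition muF (x : 'I_n -> T -> R) (F : {set 'I_n}) : R :=
  \big[Num.max/0]_(j | j \notin F) norm1 (invmx (SigmaF x F) *m CovFj x F j).

Definition risk (x : 'I_n -> T -> R) (y : T -> R) (b : 'I_n -> R) : R :=
  Ex (fun w => (y w - ip x b w) ^+ 2).

Definition is_betaS (x : 'I_n -> T -> R) (y : T -> R) (S : {set 'I_n})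
  (b : 'I_n -> R) : Prop :=
  supp b \subset S /\
  forall b' : 'I_n -> R, supp b' \subset S -> risk x y b <= risk x y b'.

Definition sigma_x (x : 'I_n -> T -> R) : set (set T) :=
  <<s \bigcup_(j in [set: 'I_n]) [set x j @^-1` B | B in measurable] >>.

(* E[eps | x] = 0 : E[eps 1_A] = 0 for every A in sigma(x) *)
Definition cond_exp_zero (x : 'I_n -> T -> R) (eps : T -> R) : Prop :=
  forall A, sigma_x x A -> (\int[P]_(w in A) (eps w)%:E = 0)%E.

End Defs.

From HB Require Import structures.
From mathcomp Require Import all_boot all_order all_algebra.
From mathcomp Require Import all_classical all_reals all_analysis.
From mathcomp Require Import measurable_realfun complex ring lra.
Import Order.TTheory GRing.Theory Num.Theory.
Set Implicit Arguments. Unset Strict Implicit. Unset Printing Implicit Defensive.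
Local Open Scope classical_set_scope.
Local Open Scope ring_scope.

(* Write r_i = E[(<x, beta^S> - y) x_i]
   for the residual correlations of beta^S and Delta = beta* - beta^S.
   - Orthogonality: E[eps | x] = 0 gives E[eps x_i] = 0, by approximating x_i
     uniformly with staircase functions of x_i, whose level sets lie in
     sigma(x).  Hence r_i = - sum_j Delta_j Sigma_ji.
   - Optimality of beta^S forces r_i = 0 for i in S, which yields the gap
     identity E[<x, Delta>^2] = - sum_{i in S* \ S} beta*_i r_i.
   - The eigenvalue bounds on Sigma_{S*} give Rayleigh bounds (spectral
     theorem over R[i]): rho |Delta|^2 <= E[<x, Delta>^2], rho <= Sigma_ii <= L.
   - A coordinatewise AM-GM inequality (greedy_gain) produces i in S* \ S with
     r_i^2 / Sigma_ii >= rho E[<x, Delta>^2] / ((s* - k) L), and the exact line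
     search along beta*_i x_i lowers the squared error by r_i^2 / Sigma_ii. *)

Section RealSymmetricSpectral.
Variable R : rcfType.
Local Open Scope complex_scope.
Local Notation toC := (real_complex R).

Lemma map_toC_realmx m k (A : 'M[R]_(m, k)) : map_mx toC A \is a realmx.
Proof. by apply/mxOverP => i j; rewrite mxE; apply/complex_realP; eexists. Qed.

Lemma eigenvalue_toC m (A : 'M[R]_m) (c : R) :
  eigenvalue (map_mx toC A) (toC c) -> eigenvalue A c.
Proof. by rewrite !eigenvalue_root_char -map_char_poly fmorph_root. Qed.

Lemma real_symmetric_spectral m (A : 'M[R]_m) : A^T = A ->
  exists U : 'M[R[i]]_m, exists dg : 'rV[R[i]]_m,
  [/\ U \is unitarymx, map_mx toC A = U^t*%sesqui *m diag_mx dg *m U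
    & forall k, exists2 c, dg 0 k = toC c & eigenvalue A c].
Proof.
move=> Asym; set AC := map_mx toC A.
have ACsym : AC \is symmetricmx.
  apply/is_hermitianmxP; rewrite expr0 scale1r; apply/matrixP => i j.
  by rewrite !mxE -[in LHS]Asym mxE.
have ACreal := map_toC_realmx A.
set U := spectralmx AC; set dg := spectral_diag AC.
have Uu : U \is unitarymx := spectral_unitarymx AC.
have ACE : AC = U^t*%sesqui *m diag_mx dg *m U.
  by rewrite -invmx_unitary //; apply/orthomx_spectralP/symmetric_normalmx.
exists U, dg; split => // k.
have /mxOverP/(_ 0 k) dk := hermitian_spectral_diag_real (realsym_hermsym ACsym ACreal).
exists (complex.Re (dg 0 k)); first by rewrite RRe_real.
apply: eigenvalue_toC; rewrite RRe_real //.
apply/eigenvalueP; exists (delta_mx 0 k *m U).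
  rewrite -/AC ACE !mulmxA mulmxtVK // scalemxAl; congr (_ *m _).
  apply/matrixP => i j; rewrite mul_mx_diag !mxE (ord1 i) eqxx /=.
  by case: eqP => [->|]; rewrite ?mulr1 ?mulr0 ?mul1r ?mul0r.
rewrite mulmx_free_eq0 ?row_free_unit ?unitarymx_unit //.
by apply/negP => /eqP/matrixP/(_ 0 k); rewrite !mxE !eqxx; apply/eqP; exact: oner_neq0.
Qed.

Lemma symmetric_rayleigh_bounds m (A : 'M[R]_m) (rho L : R) :
  A^T = A -> (forall a, eigenvalue A a -> rho <= a <= L) ->
  forall u : 'rV[R]_m,
  rho * (u *m u^T) 0 0 <= (u *m A *m u^T) 0 0 <= L * (u *m u^T) 0 0.
Proof.
move=> /real_symmetric_spectral[U [dg [Uu AE dgE]]] Aeig u.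
set uC := map_mx toC u; set w := uC *m U^t*%sesqui.
have wt : (w^t* = U *m map_mx toC u^T)%sesqui.
  rewrite /w trmx_mul map_mxM trmxCK; congr (_ *m _).
  by apply/matrixP => a b; rewrite !mxE; exact: conjc_real.
have mf p q (X : 'M[R]_(p, q)) a b : toC (X a b) = map_mx toC X a b.
  by rewrite mxE.
(* In the coordinates w = u U^t*, both quadratic forms are sums over the
   squared moduli |w_k|^2, weighted by the eigenvalues for A. *)
have formA : toC ((u *m A *m u^T) 0 0) = \sum_k dg 0 k * (w 0 k * (w 0 k)^*%R).
  rewrite mf !map_mxM AE -/uC !mulmxA -(mulmxA _ U) -wt -/w mxE.
  by apply: eq_bigr => k _; rewrite mul_mx_diag !mxE mulrAC mulrC.
have formI : toC ((u *m u^T) 0 0) = \sum_k w 0 k * (w 0 k)^*%R.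
  rewrite mf map_mxM -/uC.
  have -> : uC *m map_mx toC u^T = w *m w^t*%sesqui.
    by rewrite wt mulmxA mulmxKtV.
  by rewrite mxE; apply: eq_bigr => k _; rewrite !mxE.
have w2 k : 0 <= w 0 k * (w 0 k)^*%R by apply: mul_conjC_ge0.
have dg_bounds k : toC rho <= dg 0 k <= toC L.
  by have [c -> /Aeig] := dgE k; rewrite !lecR.
apply/andP; split; rewrite -lecR rmorphM /= formA formI mulr_sumr;
  apply: ler_sum => k _; rewrite ler_wpM2r //; by case/andP: (dg_bounds k).
Qed.
End RealSymmetricSpectral.

Section BoundedExpectation.
Context (d : measure_display) (T : measurableType d) (R : realType)
  (P : probability T R).

(* The random variables of the model: measurable and almost surely bounded.
   They are P-integrable, so Ex is additive and homogeneous on them. *)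
Definition ae_bounded (f : T -> R) : Prop :=
  measurable_fun setT f /\ exists C : R, {ae P, forall w, `|f w| <= C}.

Lemma integral_cst_prob (c : R) : (\int[P]_(w in setT) (cst c%:E) w = c%:E)%E.
Proof.
rewrite integral_cst //.
by rewrite [X in (_ * X)%E](_ : _ = 1%E) ?mule1 //; exact: probability_setT.
Qed.

Lemma ae_bounded_ge0 f : ae_bounded f ->
  exists2 C : R, 0 <= C & {ae P, forall w, `|f w| <= C}.
Proof.
move=> [_ [C hC]]; exists (Num.max C 0); first by rewrite le_max lexx orbT.
by apply: filterS hC => w /le_trans; apply; rewrite le_max lexx.
Qed.

Lemma ae_bounded_integrable f : ae_bounded f -> P.-integrable setT (EFin \o f).
Proof.
move=> bf; have [C C0 hC] := ae_bounded_ge0 bf; have [mf _] := bf.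
apply/integrableP; split; first exact/measurable_EFinP.
apply: (@le_lt_trans _ _ (\int[P]_(w in setT) (cst C%:E) w)%E).
  apply: ae_ge0_le_integral => //.
  - by apply/measurable_EFinP; apply: measurableT_comp.
  - by apply: filterS hC => w hw _ /=; rewrite lee_fin.
by rewrite integral_cst_prob ltry.
Qed.

Lemma ExE f : Ex P f = fine (\int[P]_w (f w)%:E)%E.
Proof. by rewrite /Ex unlock. Qed.

Lemma Ex_EFin f : ae_bounded f -> ((Ex P f)%:E = \int[P]_w (f w)%:E)%E.
Proof.
by move=> bf; rewrite ExE fineK // integrable_fin_num //; exact: ae_bounded_integrable.
Qed.

Lemma Ex_cst k : Ex P (fun _ => k) = k.
Proof. by rewrite ExE (integral_cst_prob k). Qed.

Lemma Ex_ge0 f : (forall w, 0 <= f w) -> 0 <= Ex P f.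
Proof. by move=> f0; rewrite ExE fine_ge0 // integral_ge0 // => w _; rewrite lee_fin. Qed.

Lemma ExD f g : ae_bounded f -> ae_bounded g ->
  Ex P (fun w => f w + g w) = Ex P f + Ex P g.
Proof.
move=> bf bg; rewrite ExE.
have -> : (\int[P]_w (f w + g w)%:E = \int[P]_w ((EFin \o f) \+ (EFin \o g)) w)%E by [].
by rewrite integralD_EFin ?ae_bounded_integrable // -!Ex_EFin.
Qed.

Lemma ExZ k f : ae_bounded f -> Ex P (fun w => k * f w) = k * Ex P f.
Proof.
move=> bf; rewrite ExE.
have -> : (\int[P]_w (k * f w)%:E = \int[P]_w (k%:E * (EFin \o f) w))%E by [].
by rewrite integralZl ?ae_bounded_integrable // -Ex_EFin.
Qed.

Lemma ExN f : ae_bounded f -> Ex P (fun w => - f w) = - Ex P f.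
Proof. by move=> bf; rewrite -mulN1r -ExZ //; congr Ex; apply: funext => w; rewrite mulN1r. Qed.

Lemma ae_bounded_cst k : ae_bounded (fun _ => k).
Proof. by split; [exact: measurable_cst | exists `|k|; apply: aeW]. Qed.

Lemma ae_boundedD f g : ae_bounded f -> ae_bounded g -> ae_bounded (fun w => f w + g w).
Proof.
move=> [mf [C hC]] [mg [D hD]]; split; first exact: measurable_funD.
exists (C + D); apply: filterS2 hC hD => w h1 h2.
by rewrite (le_trans (ler_normD _ _)) // lerD.
Qed.

Lemma ae_boundedM f g : ae_bounded f -> ae_bounded g -> ae_bounded (fun w => f w * g w).
Proof.
move=> [mf [C hC]] [mg [D hD]]; split; first exact: measurable_funM.
by exists (C * D); apply: filterS2 hC hD => w h1 h2; rewrite normrM ler_pM.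
Qed.

Lemma ae_boundedZ k f : ae_bounded f -> ae_bounded (fun w => k * f w).
Proof. exact/ae_boundedM/ae_bounded_cst. Qed.

Lemma ae_boundedN f : ae_bounded f -> ae_bounded (fun w => - f w).
Proof.
by move=> /(ae_boundedZ (-1)); congr ae_bounded; apply: funext => w; rewrite mulN1r.
Qed.

Lemma ae_boundedB f g : ae_bounded f -> ae_bounded g -> ae_bounded (fun w => f w - g w).
Proof. by move=> bf /ae_boundedN; apply: ae_boundedD. Qed.

Lemma ExB f g : ae_bounded f -> ae_bounded g ->
  Ex P (fun w => f w - g w) = Ex P f - Ex P g.
Proof. by move=> bf bg; rewrite ExD ?ExN //; exact: ae_boundedN. Qed.

Lemma ae_bounded_sum I (s : seq I) (F : I -> T -> R) : (forall i, ae_bounded (F i)) ->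
  ae_bounded (fun w => \sum_(i <- s) F i w).
Proof.
move=> bF; elim: s => [|i s IH].
  by have := ae_bounded_cst 0; congr ae_bounded; apply: funext => w; rewrite big_nil.
have := ae_boundedD (bF i) IH.
by congr ae_bounded; apply: funext => w; rewrite big_cons.
Qed.

Lemma Ex_sum I (s : seq I) (F : I -> T -> R) : (forall i, ae_bounded (F i)) ->
  Ex P (fun w => \sum_(i <- s) F i w) = \sum_(i <- s) Ex P (F i).
Proof.
move=> bF; elim: s => [|i s IH].
  by under eq_fun do rewrite big_nil; rewrite big_nil Ex_cst.
under eq_fun do rewrite big_cons.
by rewrite big_cons ExD ?IH //; exact: ae_bounded_sum.
Qed.

Lemma ae_bounded_indic (A : set T) : measurable A -> ae_bounded (\1_A : T -> R).
Proof.
move=> mA; split; first exact: measurable_indic.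
by exists 1; apply: aeW => w; rewrite indicE; case: (w \in A); rewrite ?normr1 ?normr0.
Qed.

Lemma Ex_indic (f : T -> R) (A : set T) : measurable A ->
  Ex P (fun w => f w * \1_A w) = fine (\int[P]_(w in A) (f w)%:E)%E.
Proof.
move=> mA; rewrite ExE [in RHS]integral_mkcond [in RHS]epatch_indic.
by congr (fine (integral _ _ _)); apply: funext => w /=; rewrite EFinM.
Qed.

Lemma Ex_abs_le (f : T -> R) (C : R) : 0 <= C -> measurable_fun setT f ->
  {ae P, forall w, `|f w| <= C} -> `|Ex P f| <= C.
Proof.
move=> C0 mf hC; have bf : ae_bounded f by split => //; exists C.
rewrite -lee_fin -abse_EFin Ex_EFin //.
rewrite (le_trans (le_abse_integral _ _ _)) //; first exact/measurable_EFinP.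
apply: (@le_trans _ _ (\int[P]_(w in setT) (cst C%:E) w)%E).
  apply: ae_ge0_le_integral => //.
  - by apply/measurable_EFinP; exact: measurableT_comp.
  - by apply: filterS hC => w hw _ /=; rewrite lee_fin.
by rewrite integral_cst_prob.
Qed.

End BoundedExpectation.

Section Staircase.
Variable R : realType.

(* The grid -M + j/(N+1), j < grid_size M N, covers [-M, M); the staircase
   function rounds t down to this grid.  It is a finite combination of
   indicators of intervals, and approximates t within 1/(N+1) on (-M, M). *)
Definition grid (M : R) (N j : nat) : R := j%:R / N.+1%:R - M.

Definition grid_size (M : R) (N : nat) : nat := (Num.truncn (N.+1%:R * (2 * M))).+1.

Definition in_cell (M : R) (N j : nat) (t : R) : bool := grid M N j <= t < grid M N j.+1.

Definition stair (M : R) (N : nat) (t : R) : R :=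
  \sum_(j < grid_size M N) grid M N j * (in_cell M N j t)%:R.

Lemma grid_cell M N t j : 0 <= N.+1%:R * (t + M) ->
  in_cell M N j t = (j == Num.truncn (N.+1%:R * (t + M))).
Proof.
move=> u0; have Nr0 : 0 < N.+1%:R :> R by rewrite ltr0n.
rewrite /in_cell /grid lerBlDr ltrBrDr ler_pdivrMr // ltr_pdivlMr //.
by rewrite [_ * N.+1%:R]mulrC eq_sym truncn_eq.
Qed.

Lemma stair_approx M N t : `|t| < M -> 0 <= t - stair M N t <= N.+1%:R^-1.
Proof.
rewrite ltr_norml => /andP[tM1 tM2].
have Nr0 : 0 < N.+1%:R :> R by rewrite ltr0n.
set u := N.+1%:R * (t + M).
have u0 : 0 <= u by rewrite pmulr_rge0 // -lerBlDr sub0r ltW.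
set k := Num.truncn u.
have kK : (k < grid_size M N)%N.
  rewrite ltnS; apply: le_truncn; rewrite ler_pM2l //.
  by rewrite mulr2n mulrDl mul1r lerD2r ltW.
have -> : stair M N t = grid M N k.
  rewrite /stair (bigD1 (Ordinal kK)) //= grid_cell // eqxx mulr1 big1 ?addr0 //.
  by move=> j; rewrite -val_eqE grid_cell //= => /negbTE ->; rewrite mulr0.
have [uk1 uk2] : k%:R <= u /\ u < k.+1%:R by apply/andP; apply: truncn_itv.
have -> : t - grid M N k = (u - k%:R) / N.+1%:R by rewrite /grid /u; field; rewrite gt_eqF.
rewrite divr_ge0 ?subr_ge0 //= ler_pdivrMr // mulVf ?gt_eqF //; rewrite -natr1 in uk2; lra.
Qed.

End Staircase.

Lemma eq0_of_le_invS (R : archiFieldType) (e C : R) :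
  (forall N : nat, `|e| <= C / N.+1%:R) -> e = 0.
Proof.
move=> hN; apply/eqP; apply: contraT => e0.
have ae : 0 < `|e| by rewrite normr_gt0.
have := hN (Num.truncn (C / `|e|)); rewrite ler_pdivlMr ?ltr0Sn // => h.
have : C / `|e| < (Num.truncn (C / `|e|)).+1%:R.
  by rewrite truncnS_gt.
by rewrite ltr_pdivrMr // mulrC => /(le_lt_trans h); rewrite ltxx.
Qed.

Section Orthogonality.
Context (d : measure_display) (T : measurableType d) (R : realType)
  (P : probability T R) (n : nat) (x : 'I_n -> T -> R) (eps : T -> R)
  (M : R) (i : 'I_n).
Hypotheses (mx : forall j, measurable_fun setT (x j))
  (beps : ae_bounded P eps) (eps_orth : cond_exp_zero P x eps)
  (xM : {ae P, forall w, `|x i w| < M}).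

Let cell N j := x i @^-1` `[grid M N j, grid M N j.+1[.

Let cell_sigma N j : sigma_x x (cell N j).
Proof.
apply: sub_sigma_algebra; exists i => //.
by exists `[grid M N j, grid M N j.+1[%classic => //; exact: measurable_itv.
Qed.

Let cell_measurable N j : measurable (cell N j).
Proof. by rewrite /cell -[X in measurable X]setTI; apply: mx => //; exact: measurable_itv. Qed.

Let indic_cell N j w : \1_(cell N j) w = (in_cell M N j (x i w))%:R :> R.
Proof.
rewrite indicE; congr ((nat_of_bool _)%:R).
by apply/idP/idP => [/set_mem|h]; [|apply/mem_set]; rewrite /cell /= ?in_itv.
Qed.

Lemma Ex_eps_stair N : Ex P (fun w => eps w * stair M N (x i w)) = 0.
Proof.
have -> : (fun w => eps w * stair M N (x i w)) =
    (fun w => \sum_(j < grid_size M N) grid M N j * (eps w * \1_(cell N j) w)).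
  apply: funext => w; rewrite /stair mulr_sumr.
  by apply: eq_bigr => j _; rewrite indic_cell mulrCA.
have bcell j : ae_bounded P (fun w => eps w * \1_(cell N j) w).
  by apply: ae_boundedM => //; exact: ae_bounded_indic.
rewrite Ex_sum => [|j]; last exact: ae_boundedZ.
by apply: big1 => j _; rewrite ExZ // Ex_indic // eps_orth ?mulr0.
Qed.

(* The orthogonality E[eps x_i] = 0, by approximating x_i uniformly by
   staircase functions. *)
Lemma Ex_eps_x : Ex P (fun w => eps w * x i w) = 0.
Proof.
have [C C0 epsC] := ae_bounded_ge0 beps; have [meps _] := beps.
have bxi : ae_bounded P (x i).
  by split => //; exists M; apply: filterS xM => w /ltW.
apply: (@eq0_of_le_invS _ _ C) => N.
have bstair : ae_bounded P (fun w => eps w * stair M N (x i w)).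
  apply: ae_boundedM => //; apply: ae_bounded_sum => j; apply: ae_boundedZ.
  by have := ae_bounded_indic P (cell_measurable N j); congr ae_bounded; apply: funext => w.
rewrite -[Ex P _]subr0 -(Ex_eps_stair N) -ExB //; last exact: ae_boundedM.
apply: Ex_abs_le; first by rewrite divr_ge0.
  by case: (ae_boundedB (ae_boundedM beps bxi) bstair).
apply: filterS2 xM epsC => w /(stair_approx N) /andP[s0 s1] he.
by rewrite -mulrBr normrM [X in _ * X]ger0_norm // ler_pM.
Qed.

End Orthogonality.

Section GreedyGain.
Variable R : realFieldType.

Lemma quadratic_ge0_slope0 (g c : R) : 0 <= c ->
  (forall t, 0 <= 2 * t * g + t ^+ 2 * c) -> g = 0.
Proof.
move=> c0 /(_ (- g / (c + 1))).
have c1 : c + 1 != 0 by rewrite gt_eqF // ltr_wpDl.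
have -> : 2 * (- g / (c + 1)) * g + (- g / (c + 1)) ^+ 2 * c
    = - (g ^+ 2 * (c + 2)) / (c + 1) ^+ 2 by field.
rewrite pmulr_lge0 ?invr_gt0 ?exprn_gt0 ?ltr_wpDl // oppr_ge0 => h.
by apply/eqP; rewrite -sqrf_eq0 eq_le sqr_ge0 andbT; nra.
Qed.

(* Weighted AM-GM for one coordinate, with the weight c = rho s / L <= rho. *)
Lemma amgm_coordinate (rho L s b g : R) : 0 < rho -> 0 < s -> s <= L ->
  - (b * g) <= rho / 2 * b ^+ 2 + L / (2 * rho) * (g ^+ 2 / s).
Proof.
move=> rho0 s0 sL; have L0 : 0 < L := lt_le_trans s0 sL.
set c := rho * s / L.
have c0 : 0 < c by rewrite divr_gt0 // mulr_gt0.
have c_rho : c <= rho by rewrite ler_pdivrMr // ler_pM2l.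
have sq : 0 <= (c * b + g) ^+ 2 / (2 * c).
  by rewrite divr_ge0 ?sqr_ge0 // mulr_ge0 // ltW.
have -> : L / (2 * rho) * (g ^+ 2 / s) = g ^+ 2 / (2 * c).
  by rewrite /c; field; rewrite !gt_eqF.
have : c / 2 * b ^+ 2 <= rho / 2 * b ^+ 2.
  by rewrite ler_wpM2r ?sqr_ge0 // ler_pM2r ?invr_gt0 ?ltr0n.
have sqE : (c * b + g) ^+ 2 / (2 * c) = c / 2 * b ^+ 2 + b * g + g ^+ 2 / (2 * c).
  by rewrite /c; field; rewrite !gt_eqF.
rewrite sqE in sq; lra.
Qed.

(* If Q = - sum_{i in D} b_i g_i dominates rho sum_{i in D} b_i^2
   and 0 < s_i <= L on D, then some i in D has g_i^2 / s_i >= Q rho / (|D| L):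
   by AM-GM Q <= Q/2 + (L / 2 rho) sum_D g_i^2 / s_i, and the largest term is
   at least the average. *)
Lemma greedy_gain (I : finType) (D : {set I}) (b g s : I -> R) (rho L Q : R) :
  (0 < #|D|)%N -> 0 < rho -> (forall i, i \in D -> 0 < s i <= L) ->
  Q = - \sum_(i in D) b i * g i -> rho * \sum_(i in D) b i ^+ 2 <= Q ->
  exists2 i, i \in D & #|D|%:R^-1 * (rho / L) * Q <= g i ^+ 2 / s i.
Proof.
move=> D_gt0 rho0 sD QE Qlow; have [i1 i1D] := card_gt0P D_gt0.
pose G i := g i ^+ 2 / s i.
have [i0 i0D G_max] := @arg_maxP _ R _ i1 (mem D) G i1D.
exists i0 => //; have /andP[s0 sL] := sD i0 i0D.
have L0 : 0 < L := lt_le_trans s0 sL.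
have D0 : 0 < #|D|%:R :> R by rewrite ltr0n.
have Qup : Q <= rho / 2 * \sum_(i in D) b i ^+ 2 + L / (2 * rho) * (#|D|%:R * G i0).
  have term i : i \in D -> - (b i * g i) <= rho / 2 * b i ^+ 2 + L / (2 * rho) * G i.
    by move=> /sD /andP[si0 siL]; exact: amgm_coordinate.
  rewrite QE -sumrN; apply: le_trans (ler_sum _ term) _.
  rewrite big_split /= -!mulr_sumr lerD2l ler_pM2l ?divr_gt0 ?mulr_gt0 //.
  by rewrite mulr_natl -sumr_const ler_sum.
have Q_G : Q <= L / rho * #|D|%:R * G i0.
  have : rho / 2 * \sum_(i in D) b i ^+ 2 <= Q / 2.
    by rewrite mulrAC ler_pM2r ?invr_gt0 ?ltr0n.
  have -> : L / rho * #|D|%:R * G i0 = 2 * (L / (2 * rho) * (#|D|%:R * G i0)).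
    by field; rewrite gt_eqF.
  lra.
rewrite -/(G i0); have -> : G i0 = #|D|%:R^-1 * (rho / L) * (L / rho * #|D|%:R * G i0).
  by field; rewrite !gt_eqF.
by rewrite ler_pM2l // mulr_gt0 ?invr_gt0 ?divr_gt0.
Qed.

End GreedyGain.

Lemma sum_enum_val_support (R : nmodType) n (F : {set 'I_n}) (h : 'I_n -> R) :
  (forall j, j \notin F -> h j = 0) -> \sum_(a < #|F|) h (enum_val a) = \sum_j h j.
Proof.
move=> hF; rewrite -big_enum_val big_mkcond; apply: eq_bigr => j _.
by case: ifP => // /negbT /hF ->.
Qed.

Section CovarianceRayleigh.
Context (d : measure_display) (T : measurableType d) (R : realType)
  (P : probability T R) (n : nat) (x : 'I_n -> T -> R).

Lemma Sigma_sym i j : Sigma P x i j = Sigma P x j i.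
Proof. by rewrite !mxE covarianceC. Qed.

Lemma SigmaF_rayleigh (F : {set 'I_n}) (rho L : R) :
  (forall a, eigenvalue (SigmaF P x F) a -> rho <= a <= L) ->
  forall v : 'I_n -> R, (forall j, j \notin F -> v j = 0) ->
  rho * \sum_j v j ^+ 2 <= \sum_i \sum_j v i * v j * Sigma P x i j
  <= L * \sum_j v j ^+ 2.
Proof.
move=> Feig v vF.
have Fsym : (SigmaF P x F)^T = SigmaF P x F.
  by apply/matrixP => a b; rewrite !mxE covarianceC.
pose u : 'rV[R]_#|F| := \row_a v (enum_val a).
have norm_u : (u *m u^T) 0 0 = \sum_j v j ^+ 2.
  rewrite mxE -(@sum_enum_val_support _ _ F) => [|j /vF ->]; last by rewrite expr0n.
  by apply: eq_bigr => a _; rewrite !mxE.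
have form_u : (u *m SigmaF P x F *m u^T) 0 0 = \sum_i \sum_j v i * v j * Sigma P x i j.
  rewrite exchange_big -(@sum_enum_val_support _ _ F) => [|j /vF ->]; last first.
    by apply: big1 => k _; rewrite mulr0 mul0r.
  rewrite mxE; apply: eq_bigr => b _.
  rewrite -(@sum_enum_val_support _ _ F) => [|j /vF ->]; last by rewrite !mul0r.
  by rewrite !mxE big_distrl /=; apply: eq_bigr => a _; rewrite !mxE mulrAC.
by rewrite -norm_u -form_u symmetric_rayleigh_bounds.
Qed.

Lemma Sigma_diag_bounds (F : {set 'I_n}) (rho L : R) :
  (forall a, eigenvalue (SigmaF P x F) a -> rho <= a <= L) ->
  forall i, i \in F -> rho <= Sigma P x i i <= L.
Proof.
move=> Feig i iF; pose e j : R := (j == i)%:R.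
have := SigmaF_rayleigh Feig (v := e).
have sum_e : \sum_j e j ^+ 2 = 1.
  by rewrite (bigD1 i) //= /e eqxx expr1n big1 ?addr0 // => j /negbTE ->; rewrite expr0n.
have row_e k : \sum_j e k * e j * Sigma P x k j = e k * Sigma P x k i.
  rewrite (bigD1 i) //= big1 ?addr0 /e ?eqxx ?mulr1 // => j /negbTE ->.
  by rewrite mulr0 mul0r.
have form_e : \sum_k \sum_j e k * e j * Sigma P x k j = Sigma P x i i.
  under eq_bigr do rewrite row_e.
  rewrite (bigD1 i) //= big1 ?addr0 /e ?eqxx ?mul1r // => k /negbTE ->.
  by rewrite mul0r.
rewrite sum_e form_e !mulr1; apply=> j jF; rewrite /e.
by case: eqP => // ji; move: jF; rewrite ji iF.
Qed.

End CovarianceRayleigh.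

Lemma notin_supp n (R : realType) (b : 'I_n -> R) i : i \notin supp b -> b i = 0.
Proof. by rewrite inE negbK => /eqP. Qed.

Section LinearModel.
Context (d : measure_display) (T : measurableType d) (R : realType)
  (P : probability T R) (n : nat) (x : 'I_n -> T -> R) (y : T -> R)
  (bstar : 'I_n -> R) (M : R).
Hypotheses (mx : forall j, measurable_fun setT (x j)) (my : measurable_fun setT y)
  (x_centered : forall j, 'E_P[x j]%E = 0%E)
  (eps_orth : cond_exp_zero P x (fun w => y w - ip x bstar w))
  (y_bound : {ae P, forall w, `|y w| < 1})
  (x_bound : {ae P, forall w, forall j, `|x j w| < M}).

Let bounded_x j : ae_bounded P (x j).
Proof. by split => //; exists M; apply: filterS x_bound => w /(_ j) /ltW. Qed.

Let bounded_y : ae_bounded P y.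
Proof. by split => //; exists 1; apply: filterS y_bound => w /ltW. Qed.

Let bounded_ip b : ae_bounded P (ip x b).
Proof. by apply: ae_bounded_sum => j; apply: ae_boundedZ. Qed.

Let bounded_xx i j : ae_bounded P (fun w => x i w * x j w).
Proof. exact: ae_boundedM. Qed.

(* x is centred, so its covariance matrix is its second-moment matrix. *)
Lemma Sigma_moment i j : Sigma P x i j = Ex P (fun w => x i w * x j w).
Proof.
rewrite mxE /Ex covariance.unlock /= !x_centered /=; congr (fine 'E_P[_]).
by apply: funext => w; rewrite /GRing.mul /= !subr0.
Qed.

Lemma Ex_ip_sq v :
  Ex P (fun w => ip x v w ^+ 2) = \sum_i \sum_j v i * v j * Sigma P x i j.
Proof.
have -> : (fun w => ip x v w ^+ 2) =
    (fun w => \sum_i \sum_j v i * v j * (x i w * x j w)).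
  apply: funext => w; rewrite expr2 /ip big_distrl; apply: eq_bigr => i _.
  by rewrite big_distrr; apply: eq_bigr => j _ /=; ring.
rewrite Ex_sum => [|i]; last by apply: ae_bounded_sum => j; apply: ae_boundedZ.
apply: eq_bigr => i _; rewrite Ex_sum => [|j]; last exact: ae_boundedZ.
by apply: eq_bigr => j _; rewrite ExZ // Sigma_moment.
Qed.

Lemma Ex_sq_line (f : T -> R) i a : ae_bounded P f ->
  Ex P (fun w => (f w + a * x i w) ^+ 2) = Ex P (fun w => f w ^+ 2)
    + 2 * a * Ex P (fun w => f w * x i w) + a ^+ 2 * Sigma P x i i.
Proof.
move=> bf; have bff := ae_boundedM bf bf; have bfx := ae_boundedM bf (bounded_x i).
have -> : (fun w => (f w + a * x i w) ^+ 2) = (fun w =>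
    (f w ^+ 2 + (2 * a) * (f w * x i w)) + a ^+ 2 * (x i w * x i w)).
  by apply: funext => w; ring.
rewrite ExD; [|exact/ae_boundedD/ae_boundedZ|exact: ae_boundedZ].
by rewrite ExD ?ExZ ?Sigma_moment //; exact: ae_boundedZ.
Qed.

Definition resid_corr (b : 'I_n -> R) (i : 'I_n) : R :=
  Ex P (fun w => (ip x b w - y w) * x i w).

(* Since the noise y - <x, bstar> is orthogonal to x_i, only the coefficient
   error b - bstar contributes to the correlation. *)
Lemma resid_corrE b i : resid_corr b i = \sum_j (b j - bstar j) * Sigma P x j i.
Proof.
pose eps w := y w - ip x bstar w.
have beps : ae_bounded P eps by apply: ae_boundedB.
rewrite /resid_corr; have -> : (fun w => (ip x b w - y w) * x i w) = (fun w =>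
    \sum_j (b j - bstar j) * (x j w * x i w) - eps w * x i w).
  apply: funext => w; rewrite /eps /ip mulrBl.
  have -> : \sum_j b j * x j w = \sum_j (b j - bstar j) * x j w + \sum_j bstar j * x j w.
    by rewrite -big_split; apply: eq_bigr => j _ /=; ring.
  rewrite mulrDl big_distrl /=; under eq_bigr do rewrite -mulrA.
  by ring.
rewrite ExB; [|by apply: ae_bounded_sum => j; apply: ae_boundedZ|exact: ae_boundedM].
rewrite (Ex_eps_x mx beps eps_orth (filterS (fun w h => h i) x_bound)) subr0.
rewrite Ex_sum => [|j]; last exact: ae_boundedZ.
by apply: eq_bigr => j _; rewrite ExZ // Sigma_moment.
Qed.

Lemma risk_resid b : risk P x y b = Ex P (fun w => (ip x b w - y w) ^+ 2).
Proof. by congr Ex; apply: funext => w; rewrite -opprB sqrrN. Qed.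

Lemma betaS_resid_orth S bS : is_betaS P x y S bS ->
  forall i, i \in S -> resid_corr bS i = 0.
Proof.
move=> [supp_bS bS_min] i iS.
have bres : ae_bounded P (fun w => ip x bS w - y w) by apply: ae_boundedB.
apply: (@quadratic_ge0_slope0 _ _ (Sigma P x i i)).
  by rewrite Sigma_moment; apply: Ex_ge0 => w; rewrite -expr2 sqr_ge0.
move=> t; pose b j := bS j + t * (j == i)%:R.
have supp_b : supp b \subset S.
  apply/fintype.subsetP => j; rewrite inE /b; have [-> //|ji] := eqVneq j i.
  by rewrite mulr0 addr0 => bj; apply: (fintype.subsetP supp_bS); rewrite inE.
have ip_b w : ip x b w - y w = (ip x bS w - y w) + t * x i w.
  have delta : \sum_j t * (j == i)%:R * x j w = t * x i w.
    rewrite (bigD1 i) //= eqxx mulr1 big1 ?addr0 // => j /negbTE ->.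
    by rewrite mulr0 mul0r.
  rewrite /ip /b; under eq_bigr do rewrite mulrDl.
  by rewrite big_split /= delta; ring.
have := bS_min b supp_b; rewrite !risk_resid.
have -> : (fun w => (ip x b w - y w) ^+ 2) = (fun w => (ip x bS w - y w + t * x i w) ^+ 2).
  by apply: funext => w; rewrite ip_b.
by rewrite Ex_sq_line // -/(resid_corr bS i) -addrA lerDl.
Qed.

Section Gap.
Variables (S : {set 'I_n}) (bS : 'I_n -> R).
Hypotheses (betaS : is_betaS P x y S bS) (S_sub : S \subset supp bstar).

Let De j := bstar j - bS j.

Let bS_out j : j \notin S -> bS j = 0.
Proof.
by move=> jS; apply: notin_supp; apply: contra jS; apply: (fintype.subsetP betaS.1).
Qed.

Lemma gap_identity : Ex P (fun w => ip x De w ^+ 2) =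
  - \sum_(i in supp bstar :\: S) bstar i * resid_corr bS i.
Proof.
have -> : Ex P (fun w => ip x De w ^+ 2) = - \sum_i De i * resid_corr bS i.
  rewrite Ex_ip_sq -sumrN; apply: eq_bigr => i _.
  rewrite resid_corrE mulr_sumr -sumrN; apply: eq_bigr => j _.
  by rewrite Sigma_sym /De; ring.
congr (- _); rewrite [LHS](bigID (mem (supp bstar :\: S))) /= [X in _ + X]big1 ?addr0.
  by apply: eq_bigr => i; rewrite inE => /andP[iS _]; rewrite /De bS_out // subr0.
move=> i; rewrite inE negb_and negbK => /orP[iS|i_out].
  by rewrite (betaS_resid_orth betaS) // mulr0.
have iS : i \notin S by apply: contra i_out; apply: (fintype.subsetP S_sub).
by rewrite /De bS_out // notin_supp // subr0 mul0r.
Qed.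

Lemma gap_lower (rho L : R) :
  (forall a, eigenvalue (SigmaF P x (supp bstar)) a -> rho <= a <= L) -> 0 <= rho ->
  rho * \sum_(i in supp bstar :\: S) bstar i ^+ 2 <= Ex P (fun w => ip x De w ^+ 2).
Proof.
move=> Feig rho0; rewrite Ex_ip_sq.
have De_out j : j \notin supp bstar -> De j = 0.
  move=> j_out; rewrite /De notin_supp // bS_out ?subr0 //.
  by apply: contra j_out; apply: (fintype.subsetP S_sub).
have /andP[+ _] := SigmaF_rayleigh Feig De_out; apply: le_trans.
rewrite ler_wpM2l // [leRHS](bigID (mem (supp bstar :\: S))) /=; apply: ler_wpDr.
- by apply: sumr_ge0 => i _; exact: sqr_ge0.
- by apply: ler_sum => i; rewrite inE => /andP[iS _]; rewrite /De bS_out // subr0.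
Qed.

End Gap.

Lemma line_search (bS : 'I_n -> R) i : 0 < Sigma P x i i -> bstar i != 0 ->
  Ex P (fun w => (ip x bS w + (- resid_corr bS i / (Sigma P x i i * bstar i))
      * bstar i * x i w - y w) ^+ 2)
  = Ex P (fun w => (ip x bS w - y w) ^+ 2) - resid_corr bS i ^+ 2 / Sigma P x i i.
Proof.
move=> Sig0 b0; set a := _ / _.
have -> : (fun w => (ip x bS w + a * bstar i * x i w - y w) ^+ 2) =
    (fun w => (ip x bS w - y w + a * bstar i * x i w) ^+ 2).
  by apply: funext => w; ring.
rewrite Ex_sq_line; last exact: ae_boundedB.
by rewrite -/(resid_corr bS i) /a; field; rewrite b0 gt_eqF.
Qed.

End LinearModel.

Theorem mainTheorem9 (d : measure_display) (T : measurableType d) (R : realType)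
  (P : probability T R) (n : nat)
  (x : 'I_n -> T -> R) (y : T -> R) (bstar : 'I_n -> R) (rho L M : R)
  (S : {set 'I_n}) (bS : 'I_n -> R) :
  (forall j, measurable_fun setT (x j)) ->
  measurable_fun setT y ->
  (forall j, 'E_P[x j]%E = 0%E) ->
  cond_exp_zero P x (fun w => y w - ip x bstar w) ->
  0 < rho -> rho <= L ->
  (forall F : {set 'I_n}, #|F| = #|supp bstar| ->
     forall a, eigenvalue (SigmaF P x F) a -> rho <= a <= L) ->
  (forall F : {set 'I_n}, #|F| = #|supp bstar| -> muF P x F < 1) ->
  {ae P, forall w, `|y w| < 1} ->
  {ae P, forall w, forall j, `|x j w| < M} ->
  S \proper supp bstar ->
  is_betaS P x y S bS ->
  inf [set r | exists (alpha : R) (i : 'I_n), i \in supp bstar :\: S /\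
        r = Ex P (fun w => (ip x bS w + alpha * bstar i * x i w - y w) ^+ 2)]
  <= Ex P (fun w => (ip x bS w - y w) ^+ 2)
     - (#|supp bstar|%:R - #|S|%:R)^-1 * (rho / L)
       * Ex P (fun w => (ip x (fun j => bstar j - bS j) w) ^+ 2).
Proof.
move=> mx my x_centered eps_orth rho0 _ Feig _ y_bound x_bound SS betaS.
have S_sub := proper_sub SS; have eig := Feig _ erefl.
have cardD : #|supp bstar :\: S|%:R = #|supp bstar|%:R - #|S|%:R :> R.
  by rewrite cardsD (finset.setIidPr S_sub) natrB // subset_leq_card.
have [i iD gain] : exists2 i, i \in supp bstar :\: S &
    #|supp bstar :\: S|%:R^-1 * (rho / L) * Ex P (fun w => ip x (fun j => bstar j - bS j) w ^+ 2)
    <= resid_corr P x y bS i ^+ 2 / Sigma P x i i.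
  apply: (greedy_gain (b := bstar) (g := resid_corr P x y bS) (s := fun i => Sigma P x i i)).
  - by case/properP: SS => _ [i i_in i_out]; apply/card_gt0P; exists i; rewrite inE i_out.
  - exact: rho0.
  - move=> i /setDP[i_in _]; have /andP[rho_i ->] := Sigma_diag_bounds eig i_in.
    by rewrite (lt_le_trans rho0).
  - by have := gap_identity mx my x_centered eps_orth y_bound x_bound betaS S_sub.
  - by have := gap_lower mx x_centered x_bound betaS S_sub eig (ltW rho0).
have /setDP[i_in _] := iD; have /andP[rho_i _] := Sigma_diag_bounds eig i_in.
have Sig0 : 0 < Sigma P x i i := lt_le_trans rho0 rho_i.
have b0 : bstar i != 0 by move: i_in; rewrite inE.
apply: le_trans (ge_inf _ _) _.
- by exists 0 => r [alpha [j [_ ->]]]; apply: Ex_ge0 => w; exact: sqr_ge0.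
- by exists (- resid_corr P x y bS i / (Sigma P x i i * bstar i)), i.
rewrite (line_search mx my x_centered y_bound x_bound) //.
by rewrite lerD2l lerN2 -cardD.
Qed.
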